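(* Let $\mathcal H$ be a Hilbert space, let $\mathfrak H\subset\mathcal H$ be a closed subspace, $\mathfrak N=\mathcal H\ominus\mathfrak H$, and let $A_0:\mathfrak H\to\mathcal H$ be a Hermitian contraction with ${\rm dom}\,A_0=\mathfrak H$. Let $T$ be a qsc-extension of $A_0$ in $\mathcal H$ and let $\tau=\{T;\mathfrak N,\mathfrak N,\mathfrak H\}$ be the pqs-system given by the block decomposition of $T$ with respect to $\mathcal H=\mathfrak N\oplus\mathfrak H$. Then the following are equivalent: (i) $A_0$ is simple; (ii) $T$ is $\mathfrak N$-minimal; (iii) $\tau$ is minimal.
   Context: $A_0$ Hermitian means $(A_0f,g)=(f,A_0g)$ for $f,g\in{\rm dom}\,A_0$. $A_0$ is simple if there is no nonzero subspace of ${\rm dom}\,A_0$ invariant under $A_0$ (i.e. $A_0$ has no selfadjoint part). A quasi-selfadjoint contraction (qsc-operator) is a contraction $T\in\mathbf L(\mathcal H)$ with ${\rm ker}(T-T^* )\neq\{0\}$; $T$ is a qsc-extension of $A_0$ if $A_0\subset T$ and $A_0\subset T^*$ (equivalently ${\rm dom}\,A_0\subset{\rm ker}(T-T^* )$, so ${\rm ran}(T-T^* )\subset\mathfrak N$). $T$ is $\mathfrak N$-minimal if $\overline{\rm span}\{T^n\mathfrak N:n\ge0\}=\mathcal H$. A pqs-system $\{T;\mathfrak N,\mathfrak N,\mathfrak H\}$ has $T=\begin{pmatrix}D&C\\ B&A\end{pmatrix}:\mathfrak N\oplus\mathfrak H\to\mathfrak N\oplus\mathfrak H$ contractive with ${\rm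 ran}(T-T^* )\subset\mathfrak N$; minimal means $\overline{\rm span}\{A^nB\mathfrak N\}=\mathfrak H=\overline{\rm span}\{A^{*n}C^*\mathfrak N\}$. *)

From Stdlib Require Import Reals.
Open Scope R_scope.

Record Cx := mkC { Cre : R; Cim : R }.
Definition C0 : Cx := mkC 0 0.
Definition C1 : Cx := mkC 1 0.
Definition Cadd (a b : Cx) : Cx := mkC (Cre a + Cre b) (Cim a + Cim b).
Definition Cmul (a b : Cx) : Cx :=
  mkC (Cre a * Cre b - Cim a * Cim b) (Cre a * Cim b + Cim a * Cre b).
Definition Cconj (a : Cx) : Cx := mkC (Cre a) (- Cim a).

Record HilbertSpace := {
  hs_carrier :> Type;
  vzero : hs_carrier;
  vadd : hs_carrier -> hs_carrier -> hs_carrier;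
  vscal : Cx -> hs_carrier -> hs_carrier;
  inner : hs_carrier -> hs_carrier -> Cx;
  vadd_assoc : forall x y z, vadd x (vadd y z) = vadd (vadd x y) z;
  vadd_comm : forall x y, vadd x y = vadd y x;
  vadd_0 : forall x, vadd x vzero = x;
  vadd_opp : forall x, vadd x (vscal (mkC (-1) 0) x) = vzero;
  vscal_1 : forall x, vscal C1 x = x;
  vscal_mul : forall a b x, vscal a (vscal b x) = vscal (Cmul a b) x;
  vscal_addv : forall a x y, vscal a (vadd x y) = vadd (vscal a x) (vscal a y);
  vscal_adds : forall a b x, vscal (Cadd a b) x = vadd (vscal a x) (vscal b x);
  inner_addl : forall x y z, inner (vadd x y) z = Cadd (inner x z) (inner y z);
  inner_scall : forall a x y, inner (vscal a x) y = Cmul a (inner x y);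
  inner_conj : forall x y, inner y x = Cconj (inner x y);
  inner_pos : forall x, 0 <= Cre (inner x x);
  inner_def : forall x, inner x x = C0 -> x = vzero;
  hs_complete : forall u : nat -> hs_carrier,
    (forall eps, eps > 0 -> exists N, forall m n, (N <= m)%nat -> (N <= n)%nat ->
        sqrt (Cre (inner (vadd (u m) (vscal (mkC (-1) 0) (u n)))
                          (vadd (u m) (vscal (mkC (-1) 0) (u n))))) < eps) ->
    exists x, forall eps, eps > 0 -> exists N, forall n, (N <= n)%nat ->
        sqrt (Cre (inner (vadd (u n) (vscal (mkC (-1) 0) x))
                          (vadd (u n) (vscal (mkC (-1) 0) x)))) < eps
}.

Arguments vzero {h}.
Arguments vadd {h}.
Arguments vscal {h}.
Arguments inner {h}.

Section HilbertNotions.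
Variable H : HilbertSpace.

Definition vsub (x y : H) : H := vadd x (vscal (mkC (-1) 0) y).
Definition norm (x : H) : R := sqrt (Cre (inner x x)).

Definition converges (u : nat -> H) (x : H) : Prop :=
  forall eps, eps > 0 -> exists N, forall n, (N <= n)%nat -> norm (vsub (u n) x) < eps.

Definition subspace (S : H -> Prop) : Prop :=
  S vzero /\ (forall x y, S x -> S y -> S (vadd x y)) /\
  (forall a x, S x -> S (vscal a x)).
Definition closed_set (S : H -> Prop) : Prop :=
  forall (u : nat -> H) x, (forall n, S (u n)) -> converges u x -> S x.
Definition closed_subspace (S : H -> Prop) : Prop := subspace S /\ closed_set S.

Definition orth (S : H -> Prop) (x : H) : Prop := forall y, S y -> inner x y = C0.

Inductive span (S : H -> Prop) : H -> Prop :=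
  | span_0 : span S vzero
  | span_in : forall x, S x -> span S x
  | span_add : forall x y, span S x -> span S y -> span S (vadd x y)
  | span_scal : forall a x, span S x -> span S (vscal a x).
Definition closure (S : H -> Prop) (x : H) : Prop :=
  exists u : nat -> H, (forall n, S (u n)) /\ converges u x.

Definition is_orth_proj (S : H -> Prop) (P : H -> H) : Prop :=
  forall x, S (P x) /\ orth S (vsub x (P x)).

Definition linear_op (T : H -> H) : Prop :=
  (forall x y, T (vadd x y) = vadd (T x) (T y)) /\
  (forall a x, T (vscal a x) = vscal a (T x)).
Definition contraction (T : H -> H) : Prop :=
  linear_op T /\ forall x, norm (T x) <= norm x.
Definition is_adjoint (T Ts : H -> H) : Prop :=
  forall x y, inner (T x) y = inner x (Ts y).

(* A0 : dom A0 = S -> H, a Hermitian contraction (values off S are irrelevant) *)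
Definition hermitian_contraction (S : H -> Prop) (A0 : H -> H) : Prop :=
  (forall x y, S x -> S y -> A0 (vadd x y) = vadd (A0 x) (A0 y)) /\
  (forall a x, S x -> A0 (vscal a x) = vscal a (A0 x)) /\
  (forall x, S x -> norm (A0 x) <= norm x) /\
  (forall x y, S x -> S y -> inner (A0 x) y = inner x (A0 y)).

Definition simple_op (S : H -> Prop) (A0 : H -> H) : Prop :=
  ~ (exists L : H -> Prop, closed_subspace L /\ (forall x, L x -> S x) /\
       (exists x, L x /\ x <> vzero) /\ (forall x, L x -> L (A0 x))).

Definition qsc_operator (T Ts : H -> H) : Prop :=
  contraction T /\ is_adjoint T Ts /\ exists x, x <> vzero /\ T x = Ts x.

Definition qsc_extension (S : H -> Prop) (A0 T Ts : H -> H) : Prop :=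
  qsc_operator T Ts /\ (forall x, S x -> T x = A0 x) /\ (forall x, S x -> Ts x = A0 x).

Definition N_minimal (N : H -> Prop) (T : H -> H) : Prop :=
  forall x, closure (span (fun y => exists n f, N f /\ y = Nat.iter n T f)) x.

(* block entries of T = [[D, C], [B, A]] on N (+) Hh, P = projection onto Hh *)
Definition blkA (P T : H -> H) (h : H) : H := P (T h).            (* Hh -> Hh *)
Definition blkB (P T : H -> H) (f : H) : H := P (T f).            (* N -> Hh *)
Definition blkAstar (P Ts : H -> H) (h : H) : H := P (Ts h).      (* A* : Hh -> Hh *)
Definition blkCstar (P Ts : H -> H) (f : H) : H := P (Ts f).      (* C* : N -> Hh *)

Definition pqs_minimal (Hh : H -> Prop) (P T Ts : H -> H) : Prop :=
  (forall h, Hh h -> closure (span (fun y => exists n f, orth Hh f /\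
       y = Nat.iter n (blkA P T) (blkB P T f))) h) /\
  (forall h, Hh h -> closure (span (fun y => exists n f, orth Hh f /\
       y = Nat.iter n (blkAstar P Ts) (blkCstar P Ts f))) h).

End HilbertNotions.

(* The whole argument rests on [A0 = T = T*] on [Hh].  (i) <=> (ii): the orthogonal
   complement of the Krylov set [{T^n N}] lies in [Hh] and is [T*]-invariant, hence
   [A0]-invariant; conversely an [A0]-invariant subspace of [Hh] is orthogonal to
   every [T^n N].  So both conditions say that this complement is [0], and the
   projection theorem (proved first, from the completeness axiom) turns "the
   complement is [0]" into "the Krylov set spans densely".
   (ii) <=> (iii): the orthogonal projection [P] onto [Hh] maps span [{T^n N}] into
   span [{A^n B N}] (with [A = P T] on [Hh], [B = P T] on [N]), while span [{T^n N}]
   contains both [N] and every [A^n B N]; since (i) is symmetric in [T] and [T*],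
   the same holds for [T*] and the pair [A*], [C*]. *)
From Stdlib Require Import Reals Lra Classical ClassicalEpsilon.
Open Scope R_scope.

Lemma Cx_eq (a b : Cx) : Cre a = Cre b -> Cim a = Cim b -> a = b.
Proof. destruct a, b; simpl; intros; subst; reflexivity. Qed.

Ltac cx_ring := apply Cx_eq; simpl; try ring; try field.

Lemma quadratic_discriminant (A B r : R) :
  0 <= B -> (forall t, 0 <= A + 2 * t * r + t * t * B) -> r * r <= A * B.
Proof.
  intros HB Hq. assert (HA := Hq 0).
  destruct (Req_dec B 0) as [E|E].
  - subst B. destruct (Req_dec r 0) as [Er|Er]; [subst; lra|].
    specialize (Hq (- (A + 1) / (2 * r))).
    replace (A + 2 * (- (A + 1) / (2 * r)) * r + - (A + 1) / (2 * r) * (- (A + 1) / (2 * r)) * 0)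
      with (-1) in Hq by (field; auto). lra.
  - specialize (Hq (- r / B)).
    replace (A + 2 * (- r / B) * r + - r / B * (- r / B) * B) with ((A * B - r * r) / B) in Hq
      by (field; auto).
    replace (A * B) with ((A * B - r * r) / B * B + r * r) by (field; auto). nra.
Qed.

Lemma inv_succ_small (e : R) : e > 0 -> exists N, forall n, (N <= n)%nat -> / (INR n + 1) < e.
Proof.
  intro Pe. destruct (archimed_cor1 e Pe) as [N [HN PN]].
  exists N. intros n Hn. apply le_INR in Hn.
  assert (0 < INR N) by (apply lt_0_INR; auto).
  eapply Rle_lt_trans; [|apply HN]. apply Rinv_le_contravar; lra.
Qed.

Section InnerProduct.
Context {H : HilbertSpace}.

Lemma inner_zero_l (z : H) : inner vzero z = C0.
Proof.
  pose proof (inner_addl H vzero vzero z) as E. rewrite vadd_0 in E.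
  assert (E1 := f_equal Cre E). assert (E2 := f_equal Cim E). simpl in E1, E2.
  apply Cx_eq; simpl; lra.
Qed.

Lemma inner_addr (x y z : H) : inner x (vadd y z) = Cadd (inner x y) (inner x z).
Proof.
  rewrite (inner_conj H (vadd y z) x), inner_addl, (inner_conj H x y), (inner_conj H x z).
  cx_ring.
Qed.

Lemma inner_scalr (c : Cx) (x y : H) : inner x (vscal c y) = Cmul (Cconj c) (inner x y).
Proof. rewrite (inner_conj H (vscal c y) x), inner_scall, (inner_conj H x y). cx_ring. Qed.

Lemma inner_zero_r (z : H) : inner z vzero = C0.
Proof. rewrite (inner_conj H vzero z), inner_zero_l. cx_ring. Qed.

Lemma vsub_zero_eq (u w : H) : vsub H u w = vzero -> u = w.
Proof.
  unfold vsub; intro E.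
  rewrite <- (vadd_0 H u), <- (vadd_opp H w), (vadd_comm H w), vadd_assoc, E,
    vadd_comm, vadd_0. reflexivity.
Qed.

Lemma vext (u w : H) : (forall z, inner u z = inner w z) -> u = w.
Proof.
  intro E. apply vsub_zero_eq, inner_def.
  unfold vsub at 1. rewrite inner_addl, inner_scall, !E. cx_ring.
Qed.

Lemma vext_r (u w : H) : (forall z, inner z u = inner z w) -> u = w.
Proof.
  intro E. apply vext. intro z. rewrite (inner_conj H z u), (inner_conj H z w), E. reflexivity.
Qed.

Lemma re_sym (x y : H) : Cre (inner y x) = Cre (inner x y).
Proof. rewrite (inner_conj H x y). reflexivity. Qed.

Lemma re_sub_l (a b w : H) : Cre (inner (vsub H a b) w) = Cre (inner a w) - Cre (inner b w).
Proof. unfold vsub. rewrite inner_addl, inner_scall. simpl. ring. Qed.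

Lemma inner_zero_of_re (a w : H) :
  Cre (inner a w) = 0 -> Cre (inner a (vscal (mkC 0 (-1)) w)) = 0 -> inner a w = C0.
Proof. rewrite inner_scalr. simpl. intros Er Ei. apply Cx_eq; simpl; lra. Qed.

Lemma linear_zero (U : H -> H) : linear_op H U -> U vzero = vzero.
Proof.
  intros [La _]. apply vext. intro z. rewrite inner_zero_l.
  assert (F := f_equal (fun w => inner w z) (La vzero vzero)). simpl in F.
  rewrite vadd_0, inner_addl in F.
  assert (F1 := f_equal Cre F). assert (F2 := f_equal Cim F). simpl in F1, F2.
  apply Cx_eq; simpl; lra.
Qed.

End InnerProduct.

Ltac vec_eq := apply vext; let z := fresh "z" in intro z; unfold vsub;
  repeat rewrite ?inner_addl, ?inner_scall, ?inner_zero_l; cx_ring.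

Section Norm.
Context {H : HilbertSpace}.

Definition nsq (x : H) : R := Cre (inner x x).

Lemma nsq_pos (a : H) : 0 <= nsq a.
Proof. apply inner_pos. Qed.

Lemma nsq_add (a b : H) : nsq (vadd a b) = nsq a + nsq b + 2 * Cre (inner a b).
Proof. unfold nsq. rewrite inner_addl, !inner_addr. simpl. rewrite (re_sym a b). ring. Qed.

Lemma nsq_scal (t : R) (a : H) : nsq (vscal (mkC t 0) a) = t * t * nsq a.
Proof. unfold nsq. rewrite inner_scall, inner_scalr. simpl. ring. Qed.

Lemma re_scalr (t : R) (a b : H) : Cre (inner a (vscal (mkC t 0) b)) = t * Cre (inner a b).
Proof. rewrite inner_scalr. simpl. ring. Qed.

Lemma parallelogram (p q : H) : nsq (vadd p q) + nsq (vsub H p q) = 2 * nsq p + 2 * nsq q.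
Proof. unfold vsub. rewrite !nsq_add, nsq_scal, re_scalr. ring. Qed.

Lemma norm_pos (a : H) : 0 <= norm H a.
Proof. apply sqrt_pos. Qed.

Lemma norm_sq (a : H) : nsq a = norm H a * norm H a.
Proof. unfold norm. rewrite sqrt_sqrt; [reflexivity | apply nsq_pos]. Qed.

Lemma nsq_lt_norm (a : H) eps : 0 < eps -> nsq a < eps * eps -> norm H a < eps.
Proof.
  intros P L. change (sqrt (nsq a) < eps). rewrite <- (sqrt_square eps) by lra.
  apply sqrt_lt_1_alt. split; [apply nsq_pos | lra].
Qed.

Lemma cauchy_schwarz (a b : H) : Rabs (Cre (inner a b)) <= norm H a * norm H b.
Proof.
  assert (CS : Cre (inner a b) * Cre (inner a b) <= nsq a * nsq b).
  { apply quadratic_discriminant; [apply nsq_pos|]. intro t.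
    pose proof (nsq_pos (vadd a (vscal (mkC t 0) b))) as P.
    rewrite nsq_add, nsq_scal, re_scalr in P. lra. }
  unfold norm. rewrite <- sqrt_Rsqr_abs, <- sqrt_mult by apply nsq_pos.
  apply sqrt_le_1_alt. exact CS.
Qed.

End Norm.

Section ContinuityAndOrthogonality.
Context {H : HilbertSpace}.

Lemma inner_continuous (u : nat -> H) x : converges H u x ->
  forall w eps, eps > 0 -> exists N, forall n, (N <= n)%nat ->
    Rabs (Cre (inner (u n) w) - Cre (inner x w)) < eps.
Proof.
  intros C w eps Pe.
  pose proof (norm_pos w) as Pw.
  destruct (C (eps / (norm H w + 1))) as [N HN]; [apply Rdiv_lt_0_compat; lra|].
  exists N. intros n Hn. specialize (HN n Hn).
  rewrite <- re_sub_l. eapply Rle_lt_trans; [apply cauchy_schwarz|].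
  pose proof (norm_pos (vsub H (u n) x)).
  assert (eps / (norm H w + 1) * (norm H w + 1) = eps) by (field; lra).
  nra.
Qed.

Lemma inner_limit_zero (u : nat -> H) x w : converges H u x ->
  (forall n, inner (u n) w = C0) -> inner x w = C0.
Proof.
  intros C Z.
  assert (Re : forall w', (forall n, Cre (inner (u n) w') = 0) -> Cre (inner x w') = 0).
  { intros w' Z'. destruct (Req_dec (Cre (inner x w')) 0) as [|Ne]; [assumption|].
    destruct (inner_continuous u x C w' (Rabs (Cre (inner x w')))) as [N HN].
    { apply Rabs_pos_lt. exact Ne. }
    specialize (HN N (le_n _)). rewrite Z', Rminus_0_l, Rabs_Ropp in HN. lra. }
  apply inner_zero_of_re; apply Re; intro n; rewrite ?inner_scalr, Z; simpl; ring.
Qed.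

Lemma dist_continuous (u : nat -> H) (y x : H) : converges H u y ->
  forall eps, eps > 0 -> exists N, forall n, (N <= n)%nat ->
    Rabs (nsq (vsub H x (u n)) - nsq (vsub H x y)) < eps.
Proof.
  intros Cu eps Pe.
  set (M := norm H (vsub H x y)). assert (PM : 0 <= M) by apply norm_pos.
  set (d := Rmin 1 (eps / (2 * M + 2))).
  assert (Pd : d > 0).
  { apply Rmin_glb_lt; [lra | apply Rdiv_lt_0_compat; lra]. }
  assert (Hd : d * (2 * M + 2) <= eps).
  { assert (eps / (2 * M + 2) * (2 * M + 2) = eps) by (field; lra).
    pose proof (Rmin_r 1 (eps / (2 * M + 2))). fold d in H1. nra. }
  pose proof (Rmin_l 1 (eps / (2 * M + 2))) as Hd1. fold d in Hd1.
  destruct (Cu d Pd) as [N HN]. exists N. intros n Hn.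
  set (e := vsub H (u n) y).
  assert (Ee : vsub H x (u n) = vadd (vsub H x y) (vscal (mkC (-1) 0) e)) by (unfold e; vec_eq).
  rewrite Ee, nsq_add, nsq_scal, re_scalr, (norm_sq e).
  assert (Ne : norm H e < d) by (apply HN; exact Hn).
  pose proof (norm_pos e). pose proof (cauchy_schwarz (vsub H x y) e) as CS. fold M in CS.
  set (r := Cre (inner (vsub H x y) e)) in *.
  pose proof (Rle_abs r). pose proof (Rle_abs (- r)). rewrite Rabs_Ropp in *.
  apply Rabs_def1; nra.
Qed.

Lemma orth_closed_subspace (S : H -> Prop) : closed_subspace H (orth H S).
Proof.
  split; [split; [|split]|].
  - intros v _. apply inner_zero_l.
  - intros a b Ha Hb v Sv. rewrite inner_addl, Ha, Hb by exact Sv. cx_ring.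
  - intros c a Ha v Sv. rewrite inner_scall, Ha by exact Sv. cx_ring.
  - intros u z Su Cz v Sv. apply (inner_limit_zero u z v Cz). intro n. apply Su, Sv.
Qed.

Lemma orth_span (S : H -> Prop) z : orth H S z -> orth H (span H S) z.
Proof.
  intros Oz v Sv. induction Sv as [| v Sv | a b _ IHa _ IHb | c a _ IHa].
  - apply inner_zero_r.
  - apply Oz, Sv.
  - rewrite inner_addr, IHa, IHb. cx_ring.
  - rewrite inner_scalr, IHa. cx_ring.
Qed.

Lemma span_sub (S1 S2 : H -> Prop) :
  (forall y, S1 y -> span H S2 y) -> forall v, span H S1 v -> span H S2 v.
Proof.
  intros Inc v. induction 1; [apply span_0 | apply Inc; assumption | apply span_add | apply span_scal];
    assumption.
Qed.

Lemma orth_dense_zero (S : H -> Prop) z :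
  (forall x, closure H (span H S) x) -> orth H S z -> z = vzero.
Proof.
  intros Dense Oz. apply inner_def.
  destruct (Dense z) as [u [Su Cu]]. apply (inner_limit_zero u z z Cu).
  intro n. rewrite (inner_conj H z (u n)), (orth_span S z Oz (u n) (Su n)). cx_ring.
Qed.

End ContinuityAndOrthogonality.

Section BestApproximation.
Context {H : HilbertSpace}.
Variable V : H -> Prop.
Hypotheses (V0 : V vzero) (Vadd : forall a b, V a -> V b -> V (vadd a b))
  (Vscal : forall c a, V a -> V (vscal c a)).
Variable x : H.

Lemma distance_infimum : exists d2, (forall v, V v -> d2 <= nsq (vsub H x v)) /\
  (forall eps, eps > 0 -> exists v, V v /\ nsq (vsub H x v) < d2 + eps).
Proof.
  set (E := fun r => exists v, V v /\ r = - nsq (vsub H x v)).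
  assert (Hb : bound E).
  { exists 0. intros r [v [_ ->]]. pose proof (nsq_pos (vsub H x v)). lra. }
  assert (Hne : exists r, E r) by (exists (- nsq (vsub H x vzero)); exists vzero; auto).
  destruct (completeness E Hb Hne) as [m [Hub Hlub]].
  exists (- m). split.
  - intros v Vv. assert (Ev : E (- nsq (vsub H x v))) by (exists v; auto).
    specialize (Hub _ Ev). lra.
  - intros eps Pe. apply NNPP. intro Hn.
    assert (Ub : is_upper_bound E (m - eps)).
    { intros r [v [Vv ->]]. apply Rnot_lt_le. intro L. apply Hn. exists v. split; [exact Vv | lra]. }
    specialize (Hlub _ Ub). lra.
Qed.

Section Minimizer.
Variable d2 : R.
Hypothesis lower : forall v, V v -> d2 <= nsq (vsub H x v).
Hypothesis approx : forall eps, eps > 0 -> exists v, V v /\ nsq (vsub H x v) < d2 + eps.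

Lemma closure_lower_bound w : closure H V w -> d2 <= nsq (vsub H x w).
Proof.
  intros [u [Vu Cu]]. apply Rnot_lt_le. intro L.
  destruct (dist_continuous u w x Cu (d2 - nsq (vsub H x w))) as [N HN]; [lra|].
  specialize (HN N (le_n _)). specialize (lower _ (Vu N)).
  apply Rabs_def2 in HN. lra.
Qed.

Lemma near_minimizers_close (v w : H) (e f : R) : V v -> V w ->
  nsq (vsub H x v) < d2 + e -> nsq (vsub H x w) < d2 + f -> nsq (vsub H v w) <= 2 * e + 2 * f.
Proof.
  intros Vv Vw Lv Lw.
  pose proof (parallelogram (vsub H x w) (vsub H x v)) as Pg.
  replace (vsub H (vsub H x w) (vsub H x v)) with (vsub H v w) in Pg by vec_eq.
  replace (vadd (vsub H x w) (vsub H x v))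
    with (vscal (mkC 2 0) (vsub H x (vscal (mkC (/ 2) 0) (vadd w v)))) in Pg by vec_eq.
  rewrite nsq_scal in Pg.
  assert (Mid : d2 <= nsq (vsub H x (vscal (mkC (/ 2) 0) (vadd w v)))) by auto.
  lra.
Qed.

(* A minimizing sequence converges, by completeness, to a minimizer in the closure. *)
Lemma minimizer_exists : exists m0, closure H V m0 /\ nsq (vsub H x m0) <= d2.
Proof.
  assert (Hseq : forall n : nat, exists v, V v /\ nsq (vsub H x v) < d2 + / (INR n + 1)).
  { intro n. apply approx, Rlt_gt, Rinv_0_lt_compat. pose proof (pos_INR n). lra. }
  destruct (choice _ Hseq) as [vs Hvs].
  destruct (hs_complete H vs) as [m0 Cm0].
  { intros eps Pe. destruct (inv_succ_small (eps * eps / 4)) as [N HN]; [nra|].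
    exists N. intros m n Hm Hn. change (norm H (vsub H (vs m) (vs n)) < eps).
    apply nsq_lt_norm; [lra|].
    destruct (Hvs m) as [Vm Lm], (Hvs n) as [Vn Ln].
    pose proof (near_minimizers_close _ _ _ _ Vm Vn Lm Ln).
    pose proof (HN m Hm). pose proof (HN n Hn). lra. }
  exists m0. split; [exists vs; split; [intro n; apply Hvs | exact Cm0]|].
  apply Rnot_lt_le. intro L. set (g := (nsq (vsub H x m0) - d2) / 2).
  destruct (dist_continuous vs m0 x Cm0 g) as [N1 HN1]; [unfold g; lra|].
  destruct (inv_succ_small g) as [N2 HN2]; [unfold g; lra|].
  set (n := Nat.max N1 N2).
  specialize (HN1 n (Nat.le_max_l _ _)). specialize (HN2 n (Nat.le_max_r _ _)).
  destruct (Hvs n) as [_ Ln]. apply Rabs_def2 in HN1. unfold g in *. lra.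
Qed.

Lemma closure_shift w v : closure H V w -> V v -> closure H V (vadd w v).
Proof.
  intros [u [Vu Cu]] Vv. exists (fun n => vadd (u n) v). split; [intro n; auto|].
  intros eps Pe. destruct (Cu eps Pe) as [N HN]. exists N. intros n Hn.
  replace (vsub H (vadd (u n) v) (vadd w v)) with (vsub H (u n) w) by vec_eq. auto.
Qed.

Lemma minimizer_orthogonal m0 :
  closure H V m0 -> nsq (vsub H x m0) <= d2 -> orth H V (vsub H x m0).
Proof.
  intros Cm Hm.
  assert (Hre : forall v, V v -> Cre (inner (vsub H x m0) v) = 0).
  { intros v Vv. set (r := Cre (inner (vsub H x m0) v)).
    assert (Q : forall t, 0 <= 0 + 2 * t * (- r) + t * t * nsq v).
    { intro t.
      pose proof (closure_lower_bound _ (closure_shift m0 _ Cm (Vscal (mkC t 0) v Vv))) as L.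
      replace (vsub H x (vadd m0 (vscal (mkC t 0) v)))
        with (vadd (vsub H x m0) (vscal (mkC (- t) 0) v)) in L by vec_eq.
      rewrite nsq_add, nsq_scal, re_scalr in L. fold r in L. lra. }
    pose proof (quadratic_discriminant _ _ _ (nsq_pos v) Q). nra. }
  intros v Vv. apply inner_zero_of_re; apply Hre; auto.
Qed.

End Minimizer.

Theorem best_approximation : exists m0, closure H V m0 /\ orth H V (vsub H x m0).
Proof.
  destruct distance_infimum as [d2 [lower approx]].
  destruct (minimizer_exists d2 lower approx) as [m0 [Cm Hm]].
  exists m0. split; [exact Cm | exact (minimizer_orthogonal d2 lower m0 Cm Hm)].
Qed.

End BestApproximation.

Section OrthogonalProjection.
Context {H : HilbertSpace}.
Variables (Hh : H -> Prop) (P : H -> H).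
Hypotheses (Hsub : subspace H Hh) (HP : is_orth_proj H Hh P).

Lemma proj_unique x a : Hh a -> orth H Hh (vsub H x a) -> P x = a.
Proof.
  intros Ha Ho. destruct (HP x) as [PH Po]. destruct Hsub as [_ [Hadd Hscal]].
  apply vsub_zero_eq, inner_def.
  assert (D : Hh (vsub H (P x) a)) by (apply Hadd, Hscal; assumption).
  replace (vsub H (P x) a) with (vsub H (vsub H x a) (vsub H x (P x))) at 1 by vec_eq.
  unfold vsub at 1. rewrite inner_addl, inner_scall, Ho, Po by exact D. cx_ring.
Qed.

Lemma proj_fix x : Hh x -> P x = x.
Proof.
  intro Hx. apply proj_unique; [exact Hx|].
  intros y _. replace (vsub H x x) with (@vzero H) by vec_eq. apply inner_zero_l.
Qed.

Lemma proj_kernel x : orth H Hh x -> P x = vzero.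
Proof.
  intro Hx. apply proj_unique; [apply Hsub|].
  replace (vsub H x vzero) with x by vec_eq. exact Hx.
Qed.

Lemma proj_add x y : P (vadd x y) = vadd (P x) (P y).
Proof.
  destruct (HP x) as [Px Ox], (HP y) as [Py Oy].
  apply proj_unique; [apply Hsub; assumption|].
  replace (vsub H (vadd x y) (vadd (P x) (P y)))
    with (vadd (vsub H x (P x)) (vsub H y (P y))) by vec_eq.
  intros z Hz. rewrite inner_addl, Ox, Oy by exact Hz. cx_ring.
Qed.

Lemma proj_scal c x : P (vscal c x) = vscal c (P x).
Proof.
  destruct (HP x) as [Px Ox].
  apply proj_unique; [apply Hsub; assumption|].
  replace (vsub H (vscal c x) (vscal c (P x))) with (vscal c (vsub H x (P x))) by vec_eq.
  intros z Hz. rewrite inner_scall, Ox by exact Hz. cx_ring.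
Qed.

Lemma proj_nsq x : nsq (P x) <= nsq x.
Proof.
  destruct (HP x) as [Px Ox].
  replace (nsq x) with (nsq (vadd (P x) (vsub H x (P x)))) by (f_equal; vec_eq).
  rewrite nsq_add, re_sym, Ox by exact Px. simpl.
  pose proof (nsq_pos (vsub H x (P x))). lra.
Qed.

Lemma proj_continuous u h : converges H u h -> converges H (fun n => P (u n)) (P h).
Proof.
  intros C eps Pe. destruct (C eps Pe) as [N HN]. exists N. intros n Hn.
  eapply Rle_lt_trans; [|apply (HN n Hn)].
  replace (vsub H (P (u n)) (P h)) with (P (vsub H (u n) h))
    by (unfold vsub; rewrite proj_add, proj_scal; reflexivity).
  apply sqrt_le_1_alt, proj_nsq.
Qed.

Lemma orth_orth_complement (S : H -> Prop) :
  (forall f, orth H Hh f -> S f) -> forall z, orth H S z -> Hh z.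
Proof.
  intros HS z Hz. destruct (HP z) as [PHh Porth].
  assert (Hd : vsub H z (P z) = vzero).
  { apply inner_def. unfold vsub at 1. rewrite inner_addl, inner_scall.
    rewrite Hz by (apply HS, Porth).
    rewrite (inner_conj H (vsub H z (P z)) (P z)), (Porth (P z) PHh). cx_ring. }
  apply vsub_zero_eq in Hd. rewrite Hd. exact PHh.
Qed.

End OrthogonalProjection.

Section Krylov.
Context {H : HilbertSpace}.
Variable U : H -> H.

Definition krylov (N : H -> Prop) : H -> Prop :=
  fun y => exists n f, N f /\ y = Nat.iter n U f.

Lemma krylov_step N y : krylov N y -> krylov N (U y).
Proof. intros [n [f [Nf ->]]]. exists (S n), f. split; [exact Nf | reflexivity]. Qed.

Lemma krylov_span_invariant N : linear_op H U ->
  forall w, span H (krylov N) w -> span H (krylov N) (U w).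
Proof.
  intros [La Ls] w Sw. induction Sw as [| v Kv | a b _ IHa _ IHb | c a _ IHa].
  - rewrite (linear_zero U (conj La Ls)). apply span_0.
  - apply span_in, krylov_step, Kv.
  - rewrite La. apply span_add; assumption.
  - rewrite Ls. apply span_scal; assumption.
Qed.

Variable Us : H -> H.
Hypothesis Had : is_adjoint H U Us.

Lemma orth_invariant_adjoint (S : H -> Prop) :
  (forall w, S w -> S (U w)) -> forall z, orth H S z -> orth H S (Us z).
Proof.
  intros Inv z Hz w Sw.
  rewrite (inner_conj H w (Us z)), <- Had, (inner_conj H z (U w)), Hz by (apply Inv, Sw).
  cx_ring.
Qed.

Lemma adjoint_linear : linear_op H Us.
Proof.
  split.
  - intros x y. apply vext_r. intro z. rewrite <- Had, !inner_addr, <- !Had. reflexivity.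
  - intros a x. apply vext_r. intro z. rewrite <- Had, !inner_scalr, <- Had. reflexivity.
Qed.

Lemma adjoint_sym : is_adjoint H Us U.
Proof. intros x y. rewrite (inner_conj H y (Us x)), <- Had, (inner_conj H x (U y)). cx_ring. Qed.

End Krylov.

Section SimplicityAndMinimality.
Context {H : HilbertSpace}.
Variables (Hh : H -> Prop) (U Us A0 : H -> H).
Hypotheses (Had : is_adjoint H U Us) (Hag : forall x, Hh x -> Us x = A0 x).

(* (i) => (ii): the orthogonal complement of the Krylov set of [N = Hh^perp] is a
   closed subspace of [Hh], invariant under [U* = A0]; by simplicity it is [0],
   so the Krylov set spans densely by the projection theorem. *)
Lemma simple_minimal (P : H -> H) : is_orth_proj H Hh P ->
  simple_op H Hh A0 -> N_minimal H (orth H Hh) U.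
Proof.
  intros HP Hs x. set (K := krylov U (orth H Hh)).
  destruct (best_approximation (span H K) (span_0 H K) (span_add H K) (span_scal H K) x)
    as [m0 [Cm Om]].
  destruct (classic (vsub H x m0 = vzero)) as [E|E].
  { apply vsub_zero_eq in E. subst. exact Cm. }
  exfalso. apply Hs. exists (orth H K).
  assert (LH : forall z, orth H K z -> Hh z).
  { apply (orth_orth_complement Hh P HP). intros f Nf. exists 0%nat, f. split; [exact Nf | reflexivity]. }
  split; [apply orth_closed_subspace | split; [exact LH | split]].
  - exists (vsub H x m0). split; [intros y Ky; apply Om, span_in, Ky | exact E].
  - intros z Lz. rewrite <- Hag by (apply LH, Lz).
    apply (orth_invariant_adjoint U Us Had); [apply krylov_step | exact Lz].
Qed.

(* (ii) => (i): a subspace of [Hh] invariant under [A0 = U*] is orthogonal to every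
   [U^n f] with [f] in [N], hence to a dense set, hence is [0]. *)
Lemma minimal_simple : N_minimal H (orth H Hh) U -> simple_op H Hh A0.
Proof.
  intros Hm [L [_ [LH [[x [Lx xn]] Linv]]]]. apply xn.
  assert (K : forall n f w, orth H Hh f -> L w -> inner (Nat.iter n U f) w = C0).
  { induction n as [|n IH]; intros f w Nf Lw.
    - apply Nf, LH, Lw.
    - simpl. rewrite Had, Hag by (apply LH, Lw). apply IH; [exact Nf | apply Linv, Lw]. }
  apply (orth_dense_zero (krylov U (orth H Hh)) x Hm).
  intros y [n [f [Nf ->]]]. rewrite (inner_conj H (Nat.iter n U f) x), K by assumption. cx_ring.
Qed.

End SimplicityAndMinimality.

Section Compression.
Context {H : HilbertSpace}.
Variables (Hh : H -> Prop) (P U : H -> H).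
Hypotheses (Hsub : subspace H Hh) (HP : is_orth_proj H Hh P) (LU : linear_op H U).

Definition compressed_krylov : H -> Prop :=
  fun y => exists n f, orth H Hh f /\ y = Nat.iter n (blkA H P U) (blkB H P U f).

Lemma compressed_span_invariant w :
  span H compressed_krylov w -> span H compressed_krylov (P (U w)).
Proof.
  destruct LU as [La Ls].
  induction 1 as [| v [n [f [Nf ->]]] | a b _ IHa _ IHb | c a _ IHa].
  - rewrite (linear_zero U LU), (proj_fix Hh P Hsub HP) by apply Hsub. apply span_0.
  - apply span_in. exists (S n), f. split; [exact Nf | reflexivity].
  - rewrite La, (proj_add Hh P Hsub HP). apply span_add; assumption.
  - rewrite Ls, (proj_scal Hh P Hsub HP). apply span_scal; assumption.
Qed.

(* Splitting [U^n f = (1 - P) U^n f + P U^n f] shows by induction that [P U^n f]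
   lies in the span of the compressed Krylov set. *)
Lemma proj_krylov_iterate n f : orth H Hh f -> span H compressed_krylov (P (Nat.iter n U f)).
Proof.
  intro Nf. induction n as [|n IH].
  - simpl. rewrite (proj_kernel Hh P Hsub HP f Nf). apply span_0.
  - simpl. set (v := Nat.iter n U f) in *.
    replace (P (U v)) with (vadd (P (U (vsub H v (P v)))) (P (U (P v)))).
    + apply span_add; [|apply compressed_span_invariant, IH].
      apply span_in. exists 0%nat, (vsub H v (P v)). split; [apply HP | reflexivity].
    + destruct LU as [La _]. rewrite <- (proj_add Hh P Hsub HP), <- La. do 2 f_equal. vec_eq.
Qed.

Lemma proj_krylov_span v :
  span H (krylov U (orth H Hh)) v -> span H compressed_krylov (P v).
Proof.
  induction 1 as [| v [n [f [Nf ->]]] | a b _ IHa _ IHb | c a _ IHa].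
  - rewrite (proj_fix Hh P Hsub HP) by apply Hsub. apply span_0.
  - apply proj_krylov_iterate, Nf.
  - rewrite (proj_add Hh P Hsub HP). apply span_add; assumption.
  - rewrite (proj_scal Hh P Hsub HP). apply span_scal; assumption.
Qed.

(* Conversely each [A^n B f = P U (A^(n-1) B f)] lies in the span of the Krylov set of [U],
   since [P U w = U w - (1 - P) U w] and [(1 - P) U w] lies in [N]. *)
Lemma compressed_in_krylov y : compressed_krylov y -> span H (krylov U (orth H Hh)) y.
Proof.
  set (K := krylov U (orth H Hh)).
  assert (PU : forall w, span H K w -> span H K (P (U w))).
  { intros w Kw.
    replace (P (U w)) with (vadd (U w) (vscal (mkC (-1) 0) (vsub H (U w) (P (U w))))) by vec_eq.
    apply span_add; [apply krylov_span_invariant; assumption|].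
    apply span_scal, span_in. exists 0%nat, (vsub H (U w) (P (U w))). split; [apply HP | reflexivity]. }
  intros [n [f [Nf ->]]]. induction n as [|n IH].
  - apply PU, span_in. exists 0%nat, f. split; [exact Nf | reflexivity].
  - apply PU, IH.
Qed.

Lemma minimal_compressed_dense :
  N_minimal H (orth H Hh) U -> forall h, Hh h -> closure H (span H compressed_krylov) h.
Proof.
  intros Hm h h_in. destruct (Hm h) as [u [Ku Cu]].
  exists (fun n => P (u n)). split.
  - intro n. apply proj_krylov_span, Ku.
  - rewrite <- (proj_fix Hh P Hsub HP h h_in). exact (proj_continuous Hh P Hsub HP u h Cu).
Qed.

(* (iii) => (ii): approximate [P x] inside [Hh] and add back [x - P x], which lies in [N]. *)
Lemma compressed_dense_minimal :
  (forall h, Hh h -> closure H (span H compressed_krylov) h) -> N_minimal H (orth H Hh) U.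
Proof.
  intros Hc x. destruct (HP x) as [Px Ox].
  destruct (Hc (P x) Px) as [a [Sa Ca]].
  exists (fun n => vadd (a n) (vsub H x (P x))). split.
  - intro n. apply span_add.
    + exact (span_sub _ _ compressed_in_krylov _ (Sa n)).
    + apply span_in. exists 0%nat, (vsub H x (P x)). split; [exact Ox | reflexivity].
  - intros eps Pe. destruct (Ca eps Pe) as [N HN]. exists N. intros n Hn.
    replace (vsub H (vadd (a n) (vsub H x (P x))) x) with (vsub H (a n) (P x)) by vec_eq.
    apply HN, Hn.
Qed.

End Compression.

Theorem proposition7p1 (H : HilbertSpace) (Hh : H -> Prop) (P A0 T Ts : H -> H) :
  closed_subspace H Hh ->
  is_orth_proj H Hh P ->
  hermitian_contraction H Hh A0 ->
  qsc_extension H Hh A0 T Ts ->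
  (simple_op H Hh A0 <-> N_minimal H (orth H Hh) T) /\
  (N_minimal H (orth H Hh) T <-> pqs_minimal H Hh P T Ts).
Proof.
  intros [Hsub _] HP _ [[[LT _] [Had _]] [HT HTs]].
  pose proof (adjoint_sym T Ts Had) as Had'.
  pose proof (adjoint_linear T Ts Had) as LTs.
  assert (Simple_Minimal : simple_op H Hh A0 <-> N_minimal H (orth H Hh) T).
  { split; [apply (simple_minimal Hh T Ts A0 Had HTs P HP) | apply (minimal_simple Hh T Ts A0 Had HTs)]. }
  split; [exact Simple_Minimal | split].
  - (* Simplicity is symmetric in [T] and [T*], so [T*] is [N]-minimal as well. *)
    intro Hm. split.
    + apply (minimal_compressed_dense Hh P T Hsub HP LT Hm).
    + apply (minimal_compressed_dense Hh P Ts Hsub HP LTs).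
      apply (simple_minimal Hh Ts T A0 Had' HT P HP), Simple_Minimal, Hm.
  - intros [Dense _]. apply (compressed_dense_minimal Hh P T HP LT Dense).
Qed.
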